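(* Let $\mathcal{L} \subset \mathbb{R}^n$ be a stable full-rank lattice such that every decomposition $\mathcal{L} \cong \mathcal{L}_1 \oplus \mathcal{L}_2$ with $\mathcal{L}_2$ non-trivial and indecomposable has $\mathrm{rank}(\mathcal{L}_2) = 1$. Then $\mathcal{L} \cong \mathbb{Z}^n$.
   Context: A lattice of rank $d$ is the set of integer combinations of $d$ linearly independent vectors $\mathbf{B}\in\mathbb{R}^{n\times d}$; $\det(\mathcal{L})=\sqrt{\det(\mathbf{B}^T\mathbf{B})}$, $\det(\{\vec 0\}):=1$. A sublattice is any additive subgroup. A lattice $\mathcal{L}$ is stable if $\det(\mathcal{L}) = 1$ and $\det(\mathcal{L}') \geq 1$ for all sublattices $\mathcal{L}' \subseteq \mathcal{L}$. The direct sum $\oplus$ of lattices is the orthogonal direct sum; $\cong$ means isomorphic via a linear isometry. A lattice is decomposable if it is isomorphic to a direct sum of non-trivial lattices of strictly lower rank, and indecomposable otherwise; $\mathcal{L}_1$ may be the trivial lattice $\{\vec 0\}$. *)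

From HB Require Import structures.
From mathcomp Require Import all_boot all_order all_algebra.
From mathcomp Require Import reals.
Set Implicit Arguments. Unset Strict Implicit. Unset Printing Implicit Defensive.
Import Order.TTheory GRing.Theory Num.Theory.
Local Open Scope ring_scope.

(* A lattice of rank d in R^m is given by a basis: the d rows of a
   row-free matrix B : 'M_(d, m) (vectors are row vectors). *)
Section Lattices.
Variable R : realType.

Definition in_lat (d m : nat) (B : 'M[R]_(d, m)) (v : 'rV[R]_m) : Prop :=
  exists z : 'rV[int]_d, v = map_mx (fun x : int => x%:~R) z *m B.

Definition in_span (d m : nat) (B : 'M[R]_(d, m)) (v : 'rV[R]_m) : Prop :=
  exists c : 'rV[R]_d, v = c *m B.

(* det(L) = sqrt(det(Gram matrix)); for d = 0 this is sqrt 1 = 1. *)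
Definition lat_det (d m : nat) (B : 'M[R]_(d, m)) : R :=
  Num.sqrt (\det (B *m B^T)).

(* L(B) ~= L(B'): there is a linear map (right multiplication by f) which is
   an isometry on span(L(B)) and maps L(B) onto L(B'). *)
Definition lat_iso (d m d' m' : nat) (B : 'M[R]_(d, m)) (B' : 'M[R]_(d', m')) : Prop :=
  exists f : 'M[R]_(m, m'),
    (forall v, in_span B v -> (v *m f) *m (v *m f)^T = v *m v^T) /\
    (forall v, in_lat B v -> in_lat B' (v *m f)) /\
    (forall w, in_lat B' w -> exists2 v, in_lat B v & w = v *m f).

Definition lat_dsum (d1 m1 d2 m2 : nat) (B1 : 'M[R]_(d1, m1)) (B2 : 'M[R]_(d2, m2))
  : 'M[R]_(d1 + d2, m1 + m2) := block_mx B1 0 0 B2.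

(* Stable: det L = 1 and every sublattice (subgroup of L, which is itself a
   lattice with some basis B') has det >= 1. *)
Definition lat_stable (d m : nat) (B : 'M[R]_(d, m)) : Prop :=
  lat_det B = 1 /\
  forall (d' : nat) (B' : 'M[R]_(d', m)), row_free B' ->
    (forall v, in_lat B' v -> in_lat B v) -> 1 <= lat_det B'.

Definition lat_decomposable (d m : nat) (B : 'M[R]_(d, m)) : Prop :=
  exists (d1 m1 d2 m2 : nat) (B1 : 'M[R]_(d1, m1)) (B2 : 'M[R]_(d2, m2)),
    [/\ row_free B1, row_free B2, (0 < d1 < d)%N, (0 < d2 < d)%N &
        lat_iso B (lat_dsum B1 B2)].

Definition lat_indecomposable (d m : nat) (B : 'M[R]_(d, m)) : Prop :=
  ~ lat_decomposable B.

End Lattices.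

From HB Require Import structures.
From mathcomp Require Import all_boot all_order all_algebra.
From mathcomp Require Import reals.
From mathcomp Require Import lra zify.
From Stdlib Require Import Classical.
Set Implicit Arguments. Unset Strict Implicit. Unset Printing Implicit Defensive.
Import Order.TTheory GRing.Theory Num.Theory.
Local Open Scope ring_scope.

(* Keep a basis W of the lattice L together with a colouring of its vectors
   such that vectors of different colours are orthogonal; initially all
   vectors have the same colour.  The vectors of one colour class A span a
   sublattice L_A, and L is isomorphic to the orthogonal sum of L_A and the
   sublattice spanned by the other vectors.  If A has at least two elements,
   the hypothesis forbids L_A to be indecomposable, so L_A splits orthogonally;
   pulling such a splitting back along the isometry refines the colouring and
   strictly increases the number of pairs of differently coloured indices.
   Hence eventually all colours are distinct and W is an orthogonal basis.
   Its Gram matrix is diagonal with determinant det(L)^2 = 1, while stability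
   makes every squared length |w_i|^2 at least 1: all of them equal 1, and W
   identifies L with Z^n. *)

Lemma prod_ge1_eq1 (F : numDomainType) (I : finType) (x : I -> F) :
  (forall i, 1 <= x i) -> \prod_i x i = 1 -> forall i, x i = 1.
Proof.
move=> x_ge1 prod1 i; apply/le_anti; rewrite x_ge1 andbT -prod1 (bigD1 i) //=.
rewrite ler_peMr ?(le_trans ler01) //.
by apply: (big_ind (fun y => 1 <= y)) => // a b; apply: mulr_ege1.
Qed.

Section Lattices.
Variable R : realType.
Implicit Types (d m p : nat).

Local Notation intmx := (map_mx (fun x : int => x%:~R : R)).

Lemma intmxM d m p (A : 'M[int]_(d, m)) (C : 'M[int]_(m, p)) :
  intmx (A *m C) = intmx A *m intmx C.
Proof. exact: (map_mxM (intmul (1 : R))). Qed.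

Lemma intmx1 d : intmx (1%:M : 'M[int]_d) = 1%:M.
Proof. exact: (map_mx1 (intmul (1 : R))). Qed.

Definition same_lat d d' m (X : 'M[R]_(d, m)) (Y : 'M[R]_(d', m)) :=
  forall v, in_lat X v <-> in_lat Y v.

Lemma same_lat_sym d d' m (X : 'M[R]_(d, m)) (Y : 'M[R]_(d', m)) :
  same_lat X Y -> same_lat Y X.
Proof. by move=> XY v; rewrite XY. Qed.

Lemma same_lat_trans d1 d2 d3 m (X : 'M[R]_(d1, m)) (Y : 'M[R]_(d2, m))
    (Z : 'M[R]_(d3, m)) :
  same_lat X Y -> same_lat Y Z -> same_lat X Z.
Proof. by move=> XY YZ v; rewrite XY YZ. Qed.

Lemma in_lat_row d m (X : 'M[R]_(d, m)) i : in_lat X (row i X).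
Proof. by exists (row i 1%:M); rewrite map_row intmx1 -row_mul mul1mx. Qed.

Lemma in_lat_span d m (X : 'M[R]_(d, m)) v : in_lat X v -> in_span X v.
Proof. by case=> z ->; exists (intmx z). Qed.

Lemma rows_in_latP d d' m (X : 'M[R]_(d, m)) (Y : 'M[R]_(d', m)) :
  (forall i, in_lat Y (row i X)) -> exists Z : 'M[int]_(d, d'), X = intmx Z *m Y.
Proof.
move=> /fin_all_exists [z Xz]; exists (\matrix_i z i).
by apply/row_matrixP => i; rewrite row_mul -map_row rowK -Xz.
Qed.

Lemma in_lat_rows d d' m (X : 'M[R]_(d, m)) (Y : 'M[R]_(d', m)) v :
  (forall i, in_lat Y (row i X)) -> in_lat X v -> in_lat Y v.
Proof.
by move=> /rows_in_latP [Z ->] [z ->]; exists (z *m Z); rewrite intmxM mulmxA.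
Qed.

Lemma in_lat_rowsub d d' m (f : 'I_d' -> 'I_d) (X : 'M[R]_(d, m)) v :
  in_lat (rowsub f X) v -> in_lat X v.
Proof. by apply: in_lat_rows => i; rewrite row_rowsub; apply: in_lat_row. Qed.

Lemma same_latP d d' m (X : 'M[R]_(d, m)) (Y : 'M[R]_(d', m)) :
  (forall i, in_lat Y (row i X)) -> (forall j, in_lat X (row j Y)) ->
  same_lat X Y.
Proof. by move=> XY YX v; split; apply: in_lat_rows. Qed.

Lemma same_lat_intmx d d' m (X : 'M[R]_(d, m)) (Y : 'M[R]_(d', m)) :
  same_lat X Y -> exists Z : 'M[int]_(d, d'), X = intmx Z *m Y.
Proof. by move=> XY; apply: rows_in_latP => i; apply/XY/in_lat_row. Qed.

Lemma same_lat_span d d' m (X : 'M[R]_(d, m)) (Y : 'M[R]_(d', m)) v :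
  same_lat X Y -> in_span X v -> in_span Y v.
Proof.
move=> /same_lat_intmx [Z ->] [c ->].
by exists (c *m intmx Z); rewrite mulmxA.
Qed.

Lemma same_lat_rank d d' m (X : 'M[R]_(d, m)) (Y : 'M[R]_(d', m)) :
  same_lat X Y -> \rank X = \rank Y.
Proof.
move=> XY; have [Z XZ] := same_lat_intmx XY.
have [Z' YZ] := same_lat_intmx (same_lat_sym XY).
apply/eqP; rewrite eqn_leq; apply/andP.
by split; [rewrite {1}XZ | rewrite {1}YZ]; exact: mxrankM_maxr.
Qed.

Lemma gram_entry p q m (X : 'M[R]_(p, m)) (Y : 'M[R]_(q, m)) i j :
  (X *m Y^T) i j = (row i X *m (row j Y)^T) 0 0.
Proof. by rewrite !mxE; apply: eq_bigr => k _; rewrite !mxE. Qed.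

Lemma dot_sym m (x y : 'rV[R]_m) : y *m x^T = x *m y^T.
Proof.
rewrite -[y *m x^T]trmxK trmx_mul trmxK.
by apply/matrixP => i j; rewrite !ord1 mxE.
Qed.

Lemma row_dot_gram p q m (X : 'M[R]_(p, m)) (Y : 'M[R]_(q, m)) i j :
  row i X *m (row j Y)^T = ((X *m Y^T) i j)%:M.
Proof. by rewrite [LHS]mx11_scalar -gram_entry. Qed.

Lemma dot_self m (x : 'rV[R]_m) : (x *m x^T) 0 0 = \sum_j x 0 j ^+ 2.
Proof. by rewrite mxE; apply: eq_bigr => j _; rewrite mxE expr2. Qed.

Lemma dot_self_ge0 m (x : 'rV[R]_m) : 0 <= (x *m x^T) 0 0.
Proof. by rewrite dot_self sumr_ge0 // => j _; rewrite sqr_ge0. Qed.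

Lemma dot_self_eq0 m (x : 'rV[R]_m) : x *m x^T = 0 -> x = 0.
Proof.
move=> /matrixP /(_ 0 0); rewrite dot_self mxE => /psumr_eq0P sq0.
apply/rowP => i; rewrite mxE; apply/eqP.
by rewrite -sqrf_eq0 sq0 // => j _; rewrite sqr_ge0.
Qed.

Lemma dot_span0 d m (X : 'M[R]_(d, m)) (x v : 'rV[R]_m) :
  (forall i, x *m (row i X)^T = 0) -> in_span X v -> x *m v^T = 0.
Proof.
move=> xX [c ->]; rewrite trmx_mul mulmxA.
suff -> : x *m X^T = 0 by rewrite mul0mx.
by apply/rowP => i; rewrite gram_entry row_id xX !mxE.
Qed.

Lemma dot_selfD m (x y : 'rV[R]_m) :
  (x + y) *m (x + y)^T = x *m x^T + (x *m y^T) *+ 2 + y *m y^T.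
Proof. by rewrite linearD /= mulmxDl !mulmxDr (dot_sym x y) mulr2n !addrA. Qed.

Lemma span_isometry_dot d m p (X : 'M[R]_(d, m)) (f : 'M[R]_(m, p)) x y :
  (forall v, in_span X v -> (v *m f) *m (v *m f)^T = v *m v^T) ->
  in_span X x -> in_span X y -> (x *m f) *m (y *m f)^T = x *m y^T.
Proof.
move=> iso [a ->] [b ->].
have spanX c : in_span X (c *m X) by exists c.
have := iso _ (spanX (a + b)).
rewrite (mulmxDl a b X) (mulmxDl (a *m X) (b *m X) f) !dot_selfD.
rewrite (iso _ (spanX a)) (iso _ (spanX b)) => /addIr /addrI /matrixP E2.
by apply/matrixP => i j; move: (E2 i j); rewrite !mulmxnE; lra.
Qed.

Lemma row_free_rowsub d d' m (f : 'I_d' -> 'I_d) (X : 'M[R]_(d, m)) :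
  row_free X -> injective f -> row_free (rowsub f X).
Proof.
move=> /row_freeP [K XK] f_inj; apply/row_freeP.
exists (K *m (rowsub f 1%:M)^T); rewrite mulmxA mul_rowsub_mx XK mul_rowsub_mx mul1mx.
by apply/matrixP => i j; rewrite !mxE (inj_eq f_inj) eq_sym.
Qed.

Lemma row_free_row d m (X : 'M[R]_(d, m)) i : row_free X -> row_free (row i X).
Proof.
have -> : row i X = rowsub (fun=> i) X by apply/matrixP => a b; rewrite !mxE.
by move/row_free_rowsub; apply => a b _; rewrite !ord1.
Qed.

Lemma lat_iso_gram d m p (X : 'M[R]_(d, m)) (Y : 'M[R]_(d, p)) :
  row_free X -> X *m X^T = Y *m Y^T -> lat_iso X Y.
Proof.
move=> /row_freeP [K XK] XY; exists (K *m Y).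
have XKY c : c *m X *m (K *m Y) = c *m Y.
  by rewrite mulmxA -(mulmxA c) XK mulmx1.
split; [|split].
- move=> _ [c ->]; rewrite XKY !trmx_mul !mulmxA.
  by rewrite -(mulmxA c Y) -(mulmxA c X) XY.
- by move=> _ [z ->]; exists z; rewrite XKY.
- by move=> _ [z ->]; exists (intmx z *m X); [exists z | rewrite XKY].
Qed.

Lemma same_lat_iso d d' m k p (X : 'M[R]_(d, m)) (W : 'M[R]_(d', m))
    (Y : 'M[R]_(k, p)) :
  same_lat X W -> lat_iso W Y -> lat_iso X Y.
Proof.
move=> XW [f [iso [fL fO]]]; exists f; split; [|split].
- by move=> v /(same_lat_span XW); apply: iso.
- by move=> v /XW; apply: fL.
- by move=> w /fO [v /XW Xv ->]; exists v.
Qed.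

Lemma lat_iso_pullback d m k p (E : 'M[R]_(d, m)) (D : 'M[R]_(k, p)) :
  row_free E -> row_free D -> lat_iso E D ->
  k = d /\ exists P : 'M[R]_(k, m), same_lat P E /\ P *m P^T = D *m D^T.
Proof.
move=> rfE rfD [f [iso [fL fO]]].
have [P [PE PfD]] : exists P : 'M[R]_(k, m),
    (forall r, in_lat E (row r P)) /\ P *m f = D.
  have /fin_all_exists2 [v vE vD] := fun r => fO _ (in_lat_row D r).
  exists (\matrix_r v r); split => [r|]; first by rewrite rowK.
  by apply/row_matrixP => r; rewrite row_mul rowK -vD.
(* [row j E - y P] is in the span of E and mapped to 0 by the isometry f. *)
have EP j : in_lat P (row j E).
  have [y Ey] := fL _ (in_lat_row E j).
  exists y; apply/eqP; rewrite -subr_eq0; apply/eqP/dot_self_eq0.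
  have [Z PZ] := rows_in_latP PE.
  rewrite -iso; last first.
    by exists ('e_j - intmx y *m intmx Z); rewrite mulmxBl -rowE PZ mulmxA.
  by rewrite mulmxBl Ey -mulmxA PfD subrr mul0mx.
have PE' := same_latP PE EP.
have rkP : \rank P = d by rewrite (same_lat_rank PE'); apply/eqP.
split.
  apply/eqP; rewrite eqn_leq -rkP rank_leq_row andbT.
  by rewrite -{1}(eqP rfD) -PfD mxrankM_maxl.
exists P; split => //; apply/matrixP => r s.
rewrite -PfD gram_entry [RHS]gram_entry !row_mul.
by rewrite (span_isometry_dot iso) //; apply: in_lat_span.
Qed.

Lemma lat_dsum_gram d1 m1 d2 m2 (B1 : 'M[R]_(d1, m1)) (B2 : 'M[R]_(d2, m2)) :
  lat_dsum B1 B2 *m (lat_dsum B1 B2)^T = block_mx (B1 *m B1^T) 0 0 (B2 *m B2^T).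
Proof.
by rewrite /lat_dsum tr_block_mx !trmx0 mulmx_block !mulmx0 !mul0mx !addr0 !add0r.
Qed.

Lemma lat_dsum_row_free d1 m1 d2 m2 (B1 : 'M[R]_(d1, m1)) (B2 : 'M[R]_(d2, m2)) :
  row_free B1 -> row_free B2 -> row_free (lat_dsum B1 B2).
Proof.
move=> /row_freeP [K1 BK1] /row_freeP [K2 BK2]; apply/row_freeP.
exists (block_mx K1 0 0 K2); rewrite /lat_dsum mulmx_block.
by rewrite !mulmx0 !mul0mx !addr0 !add0r BK1 BK2 -scalar_mx_block.
Qed.

Lemma decomposable_orth_split d m (E : 'M[R]_(d, m)) :
  row_free E -> lat_decomposable E ->
  exists (P : 'M[R]_(d, m)) (S : {set 'I_d}),
    [/\ same_lat P E, S != set0, ~: S != set0 &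
        forall r s, r \in S -> s \notin S -> row r P *m (row s P)^T = 0].
Proof.
move=> rfE [d1 [m1 [d2 [m2 [B1 [B2 [rf1 rf2 /andP [d1_gt0 _] /andP [d2_gt0 _]]]]]]]].
move=> iso.
have [dE [P [PE PD]]] := lat_iso_pullback rfE (lat_dsum_row_free rf1 rf2) iso.
subst d; exists P, [set r : 'I_(d1 + d2) | (r < d1)%N]; split => //.
- by apply/set0Pn; exists (lshift d2 (Ordinal d1_gt0)); rewrite inE.
- by apply/set0Pn; exists (rshift d1 (Ordinal d2_gt0)); rewrite !inE /= addn0 ltnn.
move=> r s; rewrite !inE row_dot_gram PD lat_dsum_gram.
case: (split_ordP r) => {}r -> // _; case: (split_ordP s) => {}s -> // _.
by rewrite block_mxEur mxE raddf0.
Qed.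

Definition rows_of n m (A : {set 'I_n}) (W : 'M[R]_(n, m)) : 'M[R]_(#|A|, m) :=
  rowsub enum_val W.

Lemma lat_iso_dsum_rows_of n m (W : 'M[R]_(n, m)) (A : {set 'I_n}) :
  row_free W ->
  (forall i j, i \notin A -> j \in A -> row i W *m (row j W)^T = 0) ->
  lat_iso W (lat_dsum (rows_of (~: A) W) (rows_of A W)).
Proof.
move=> rfW orth; set W1 := rows_of _ W; set W2 := rows_of _ W.
pose Q := col_mx W1 W2.
have WQ : same_lat W Q.
  apply: same_latP => [i | r].
  - case: (boolP (i \in A)) => iA.
      rewrite -(enum_rankK_in iA iA) -(row_rowsub enum_val W) -(rowKd _ W1).
      exact: in_lat_row.
    have iA' : i \in ~: A by rewrite inE.
    rewrite -(enum_rankK_in iA' iA') -(row_rowsub enum_val W) -(rowKu _ _ W2).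
    exact: in_lat_row.
  - case: (split_ordP r) => {}r ->; rewrite ?rowKu ?rowKd row_rowsub;
      exact: in_lat_row.
have rfQ : row_free Q.
  by rewrite /row_free -(same_lat_rank WQ) (eqP rfW) addnC cardsC card_ord.
apply: (same_lat_iso WQ); apply: lat_iso_gram rfQ _.
have W12 : W1 *m W2^T = 0.
  apply/matrixP => r s; rewrite gram_entry !row_rowsub orth ?mxE //.
    by rewrite -in_setC enum_valP.
  exact: enum_valP.
have W21 : W2 *m W1^T = 0 by rewrite -[W2]trmxK -trmx_mul W12 trmx0.
by rewrite lat_dsum_gram tr_col_mx mul_col_row W12 W21.
Qed.

Lemma lat_stable_norm d m (B : 'M[R]_(d, m)) (v : 'rV[R]_m) :
  lat_stable B -> row_free v -> in_lat B v -> 1 <= (v *m v^T) 0 0.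
Proof.
move=> [_ stab] rfv vB.
have /(stab 1%N v rfv) : forall w, in_lat v w -> in_lat B w.
  by move=> w; apply: in_lat_rows => i; rewrite row_id.
by rewrite /lat_det det_mx11 -{1}sqrtr1 ler_sqrt ?dot_self_ge0.
Qed.

Lemma same_lat_gram_det n (W B : 'M[R]_n) :
  row_free B -> same_lat W B -> \det (W *m W^T) = \det (B *m B^T).
Proof.
move=> rfB WB; have [U WU] := same_lat_intmx WB.
have [V BV] := same_lat_intmx (same_lat_sym WB).
have detB0 : \det B != 0 by rewrite -unitfE -unitmxE -row_free_unit.
have detVU : \det V * \det U = 1.
  apply: (@intr_inj R); apply: (mulIf detB0).
  rewrite mul1r rmorphM /= -!(det_map_mx (intmul (1 : R))) -!det_mulmx.
  by rewrite -mulmxA -WU -BV.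
(* The transition matrices U and V are integral and mutually inverse. *)
have detU2 : \det U ^+ 2 = 1.
  by move: detVU => /intUnitRing.unitzPl /orP [] /eqP ->.
rewrite !det_mulmx !det_tr WU det_mulmx (det_map_mx (intmul (1 : R))).
by rewrite mulrACA -expr2 -rmorphXn detU2 mul1r.
Qed.

Section Frames.
Variables (n : nat) (B : 'M[R]_n).
Hypothesis rfB : row_free B.

Definition frame (W : 'M[R]_n) (g : 'I_n -> nat) :=
  same_lat W B /\ forall i j, g i != g j -> row i W *m (row j W)^T = 0.

Definition color_class (g : 'I_n -> nat) c := [set i | g i == c].

Definition pairs (g : 'I_n -> nat) := [set ij : 'I_n * 'I_n | g ij.1 != g ij.2].

Lemma mem_color_class g i : i \in color_class g (g i).
Proof. by rewrite inE. Qed.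

Lemma frame_row_free W g : frame W g -> row_free W.
Proof. by case=> WB _; rewrite /row_free (same_lat_rank WB). Qed.

Lemma frame_color_split W g c : frame W g ->
  lat_iso B (lat_dsum (rows_of (~: color_class g c) W) (rows_of (color_class g c) W)).
Proof.
move=> frW; case: (frW) => WB orth.
apply: (same_lat_iso (same_lat_sym WB)).
apply: lat_iso_dsum_rows_of (frame_row_free frW) _ => i j; rewrite !inE => gi /eqP gj.
by apply: orth; rewrite gj.
Qed.

Section Refinement.
Variables (W : 'M[R]_n) (g : 'I_n -> nat) (i0 : 'I_n).
Let A := color_class g (g i0).
Variables (P : 'M[R]_(#|A|, n)) (S : {set 'I_#|A|}).
Hypotheses (frW : frame W g) (PA : same_lat P (rows_of A W)).
Hypotheses (S_neq0 : S != set0) (SC_neq0 : ~: S != set0).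
Hypothesis P_orth : forall r s, r \in S -> s \notin S -> row r P *m (row s P)^T = 0.

Let pos i : 'I_#|A| := enum_rank_in (mem_color_class g i0) i.
Let fresh := (\max_i g i).+1.

Definition refined_basis : 'M[R]_n :=
  \matrix_i (if i \in A then row (pos i) P else row i W).

Definition refined_coloring i :=
  if i \in A then (if pos i \in S then g i0 else fresh) else g i.

Let g_neq_fresh i : g i != fresh.
Proof. by rewrite neq_ltn ltnS leq_bigmax. Qed.

Let row_refined_in i : i \in A -> row i refined_basis = row (pos i) P.
Proof. by move=> iA; rewrite rowK iA. Qed.

Let row_refined_out i : i \notin A -> row i refined_basis = row i W.
Proof. by move=> /negbTE iA; rewrite rowK iA. Qed.

Let row_P r : row r P = row (enum_val r) refined_basis.
Proof. by rewrite row_refined_in ?enum_valP // /pos enum_valK_in. Qed.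

Lemma refined_same_lat : same_lat refined_basis B.
Proof.
apply: same_lat_trans frW.1; apply: same_latP => i.
- case: (boolP (i \in A)) => iA; last by rewrite row_refined_out //; exact: in_lat_row.
  by rewrite row_refined_in //; apply/in_lat_rowsub/PA/in_lat_row.
- case: (boolP (i \in A)) => iA; last by rewrite -row_refined_out //; exact: in_lat_row.
  have -> : row i W = row (pos i) (rows_of A W) by rewrite row_rowsub enum_rankK_in.
  apply: (@in_lat_rows _ _ _ P) => [r | ]; last exact/PA/in_lat_row.
  by rewrite row_P; apply: in_lat_row.
Qed.

Let W_orth_P i v : i \notin A -> in_lat P v -> row i W *m v^T = 0.
Proof.
move=> iA /PA /in_lat_span; apply: dot_span0 => r; rewrite row_rowsub.
apply: frW.2; apply: contra iA; have := enum_valP r.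
by rewrite !inE => /eqP ->.
Qed.

Lemma refined_orth i j : refined_coloring i != refined_coloring j ->
  row i refined_basis *m (row j refined_basis)^T = 0.
Proof.
rewrite /refined_coloring.
case: (boolP (i \in A)) => iA; case: (boolP (j \in A)) => jA.
- rewrite !row_refined_in //.
  case: (boolP (pos i \in S)) => iS; case: (boolP (pos j \in S)) => jS;
    rewrite ?eqxx // => _; first exact: P_orth.
  by rewrite dot_sym P_orth.
- move=> _; rewrite row_refined_in // row_refined_out //.
  by rewrite dot_sym (W_orth_P jA (in_lat_row _ _)).
- move=> _; rewrite row_refined_out // row_refined_in //.
  exact: W_orth_P iA (in_lat_row _ _).
- by rewrite !row_refined_out //; apply: frW.2.
Qed.

Lemma refined_pairs : (#|pairs g| < #|pairs refined_coloring|)%N.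
Proof.
apply: proper_card; apply/properP; split.
- apply/subsetP => -[i j]; rewrite !inE /= /refined_coloring.
  case: (boolP (i \in A)) => iA; case: (boolP (j \in A)) => jA //.
  + by move: iA jA; rewrite !inE => /eqP -> /eqP ->; rewrite eqxx.
  + move: jA; rewrite inE eq_sym => jA _.
    by case: ifP => _; rewrite // eq_sym g_neq_fresh.
  + move: iA; rewrite inE => iA _.
    by case: ifP => _; rewrite // g_neq_fresh.
have [r rS] := set0Pn _ S_neq0; have [s] := set0Pn _ SC_neq0; rewrite inE => sS.
have rA := enum_valP r; have sA := enum_valP s.
exists (enum_val r, enum_val s); rewrite !inE /=.
  by rewrite /refined_coloring rA sA /pos !enum_valK_in rS (negbTE sS) g_neq_fresh.
by move: rA sA; rewrite !inE negbK => /eqP -> /eqP ->.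
Qed.

End Refinement.

Lemma frame_orthonormal W g :
  lat_stable B -> frame W g -> injective g -> W *m W^T = 1%:M.
Proof.
move=> stB frW g_inj; have rfW := frame_row_free frW.
have [WB orth] := frW; set G := W *m W^T.
have Goff i j : i != j -> G i j = 0.
  by move=> ij; rewrite gram_entry orth ?mxE // (inj_eq g_inj).
have G_ge1 i : 1 <= G i i.
  rewrite gram_entry; apply: lat_stable_norm stB (row_free_row _ rfW) _.
  exact/WB/in_lat_row.
have detBB : \det (B *m B^T) = 1.
  have [detB1 _] := stB.
  have BB_ge0 : 0 <= \det (B *m B^T).
    by rewrite det_mulmx det_tr -expr2; exact: sqr_ge0.
  by rewrite -[LHS]sqr_sqrtr // -/(lat_det B) detB1 expr1n.
have Gdiag : G = diag_mx (\row_i G i i).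
  apply/matrixP => i j; rewrite [RHS]mxE [X in X *+ _]mxE.
  by case: eqVneq => [->|/Goff ->]; rewrite ?mulr1n ?mulr0n.
have prodG : \prod_i G i i = 1.
  transitivity (\det G); last by rewrite /G (same_lat_gram_det rfB WB).
  by rewrite {2}Gdiag det_diag; apply: eq_bigr => i _; rewrite [RHS]mxE.
apply/matrixP => i j; rewrite [RHS]mxE.
by case: eqVneq => [<-|/Goff]; rewrite ?(prod_ge1_eq1 G_ge1 prodG).
Qed.

Section Saturation.
Hypothesis rank1 :
  forall (d1 m1 d2 m2 : nat) (B1 : 'M[R]_(d1, m1)) (B2 : 'M[R]_(d2, m2)),
  row_free B1 -> row_free B2 -> lat_iso B (lat_dsum B1 B2) ->
  (0 < d2)%N -> lat_indecomposable B2 -> d2 = 1%N.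

Lemma frame_step W g : frame W g ->
  injective g \/ exists W' g', frame W' g' /\ (#|pairs g| < #|pairs g'|)%N.
Proof.
move=> frW; have rfW := frame_row_free frW.
case: (boolP (injectiveb g)) => [/injectiveP | /injectivePn [i [j ij gij]]].
  by left.
right.
set A := color_class g (g i).
have rf_rows_of (C : {set 'I_n}) : row_free (rows_of C W).
  exact: row_free_rowsub rfW enum_val_inj.
have [dec | indec] := classic (lat_decomposable (rows_of A W)).
  have [P [S [PA S_neq0 SC_neq0 P_orth]]] :=
    decomposable_orth_split (rf_rows_of A) dec.
  exists (refined_basis W P), (refined_coloring S); split.
    by split; [exact: refined_same_lat | exact: refined_orth].
  exact: refined_pairs.
have A_gt0 : (0 < #|A|)%N by apply/card_gt0P; exists i; apply: mem_color_class.
have := rank1 (rf_rows_of _) (rf_rows_of _) (frame_color_split (g i) frW) A_gt0 indec.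
have : [set i; j] \subset A.
  by apply/subsetP => k; rewrite !inE => /orP [] /eqP ->; rewrite ?gij.
by move/subset_leq_card; rewrite cards2 ij => /[swap] ->.
Qed.

Lemma exists_injective_frame : exists W g, frame W g /\ injective g.
Proof.
have frB : frame B (fun=> 0%N) by split=> // i j; rewrite eqxx.
suff: forall k W g, frame W g -> (n * n - #|pairs g| < k)%N ->
    exists W g, frame W g /\ injective g by apply; [exact: frB | exact: ltnSn].
elim=> // k IH W g frW; case: (frame_step frW) => [g_inj _ | [W' [g' [frW' lt]]] le].
  by exists W, g.
apply: IH frW' _; have := max_card (pairs g'); rewrite card_prod card_ord; lia.
Qed.

End Saturation.
End Frames.
End Lattices.

Theorem corollary2p4 (R : realType) (n : nat) (B : 'M[R]_n) :
  row_free B ->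
  lat_stable B ->
  (forall (d1 m1 d2 m2 : nat) (B1 : 'M[R]_(d1, m1)) (B2 : 'M[R]_(d2, m2)),
      row_free B1 -> row_free B2 ->
      lat_iso B (lat_dsum B1 B2) ->
      (0 < d2)%N -> lat_indecomposable B2 ->
      d2 = 1%N) ->
  lat_iso B (1%:M : 'M[R]_n).
Proof.
move=> rfB stB rank1.
have [W [g [frW g_inj]]] := exists_injective_frame rfB rank1.
have WW1 := frame_orthonormal rfB stB frW g_inj.
apply: (same_lat_iso (same_lat_sym frW.1)).
by apply: lat_iso_gram (frame_row_free rfB frW) _; rewrite WW1 trmx1 mulmx1.
Qed.
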